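(* Let $m\ge5$ be odd, $h=\frac{m-1}{2}$, and $A=\{1,2,\dots,2^{h-1}-1\}$. For any $i,j\in A$ with $j$ odd, $$C_{i+2^h}\cap C_j=\begin{cases}C_j,&\text{if }(i,j)=(2^s i_1,\ i_1+2^{h-s})\text{ for some odd } i_1\in\{1,\dots,2^{h-1-s}-1\}\text{ and } s\in\{2,3,\dots,h-2\},\\ \emptyset,&\text{otherwise.}\end{cases}$$
   Context: Let $v=2^m-1$. For an integer $i$, $C_i=\{i\cdot 2^s \bmod v: s\ge 0\}$ is the $2$-cyclotomic coset of $i$ modulo $v$. *)

From mathcomp Require Import all_boot.
From mathcomp Require Import classical_sets.
Set Implicit Arguments. Unset Strict Implicit. Unset Printing Implicit Defensive.

Definition cyc_coset (m i : nat) : set nat :=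
  [set x | exists s : nat, x = (i * 2 ^ s) %% (2 ^ m - 1)].

From mathcomp Require Import all_boot.
From mathcomp Require Import classical_sets.
From mathcomp Require Import zify.
Set Implicit Arguments. Unset Strict Implicit. Unset Printing Implicit Defensive.
Local Open Scope classical_set_scope.

(* Modulo [2 ^ m - 1], multiplying by [2 ^ t] rotates the [m]-bit binary
   expansion by [t] places, and two cyclotomic cosets are equal or disjoint,
   so it suffices to decide when [j] lies in [C_(i + 2 ^ h)].  A rotation of [i + 2 ^ h] by [t <= h] places needs no
   reduction and stays [>= 2 ^ h > j].  A rotation by [m - r] places, with
   [0 < r <= h], moves the low [r] bits of [i] to the top and yields
   [i / 2 ^ r + 2 ^ (h - r) + (i mod 2 ^ r) 2 ^ (m - r)]; this can be below
   [2 ^ (h - 1)] only if [i mod 2 ^ r = 0] and [i / 2 ^ r < 2 ^ (h - 1 - r)],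
   and then the parity of [j] forces [2 <= r <= h - 2] and [i / 2 ^ r] odd. *)

Lemma exp2_Mersenne m : 2 ^ m = (2 ^ m - 1).+1.
Proof. by rewrite subn1 prednK // expn_gt0. Qed.

Lemma mul_exp2_mod_Mersenne m b : b * 2 ^ m = b %[mod 2 ^ m - 1].
Proof. by rewrite {1}exp2_Mersenne mulnS addnC modnMDl. Qed.

Lemma mul_exp2M_mod_Mersenne m k b : b * 2 ^ (m * k) = b %[mod 2 ^ m - 1].
Proof.
elim: k => [|k IHk]; first by rewrite muln0 expn0 muln1.
by rewrite mulnS expnD mulnA -modnMml mul_exp2_mod_Mersenne modnMml.
Qed.

Lemma exp2_mod_Mersenne m x t : x * 2 ^ t = x * 2 ^ (t %% m) %[mod 2 ^ m - 1].
Proof.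
rewrite {1}(divn_eq t m) addnC expnD mulnA [t %/ m * m]mulnC.
exact: mul_exp2M_mod_Mersenne.
Qed.

Lemma exp2_rot_mod_Mersenne m r a b : r <= m ->
  (a * 2 ^ r + b) * 2 ^ (m - r) = a + b * 2 ^ (m - r) %[mod 2 ^ m - 1].
Proof.
move=> le_rm; rewrite mulnDl -mulnA -expnD subnKC //.
by rewrite -modnDml mul_exp2_mod_Mersenne modnDml.
Qed.

Lemma cyc_coset_mul_exp2 m x y u :
  cyc_coset m x y -> cyc_coset m x ((y * 2 ^ u) %% (2 ^ m - 1)).
Proof. by case=> s ->; exists (s + u); rewrite modnMml expnD mulnA. Qed.

Lemma cyc_coset_sub m x y : cyc_coset m x y -> cyc_coset m y `<=` cyc_coset m x.
Proof. by move=> xy z [u ->]; apply: cyc_coset_mul_exp2. Qed.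

Lemma cyc_coset_exp2_ltn m x y : 0 < m ->
  cyc_coset m x y -> exists2 t, t < m & y = (x * 2 ^ t) %% (2 ^ m - 1).
Proof.
by move=> m_gt0 [s ->]; exists (s %% m); rewrite ?ltn_mod // exp2_mod_Mersenne.
Qed.

Lemma cyc_coset_meet_mem m x y z : 0 < m -> y < 2 ^ m - 1 ->
  cyc_coset m x z -> cyc_coset m y z -> cyc_coset m x y.
Proof.
move=> m_gt0 y_lt xz [s ez]; rewrite {z}ez in xz.
(* [2 ^ (m * s - s)] inverts [2 ^ s] modulo [2 ^ m - 1]. *)
have <- : ((y * 2 ^ s) %% (2 ^ m - 1) * 2 ^ (m * s - s)) %% (2 ^ m - 1) = y.
  rewrite modnMml -mulnA -expnD subnKC; last by rewrite leq_pmull.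
  by rewrite mul_exp2M_mod_Mersenne modn_small.
exact: cyc_coset_mul_exp2.
Qed.

Lemma cyc_coset_meet_id m x y :
  cyc_coset m x y -> cyc_coset m x `&` cyc_coset m y = cyc_coset m y.
Proof. by move=> xy; apply/setIidr/cyc_coset_sub. Qed.

Lemma cyc_coset_meet0 m x y : 0 < m -> y < 2 ^ m - 1 ->
  ~ cyc_coset m x y -> cyc_coset m x `&` cyc_coset m y = set0.
Proof.
move=> m_gt0 y_lt not_xy; apply/seteqP; split=> // z [xz yz].
by case: not_xy; apply: cyc_coset_meet_mem xz yz.
Qed.

Definition shift_pair (h i j : nat) := exists s i1 : nat,
  [/\ 2 <= s <= h - 2, odd i1, 1 <= i1 <= 2 ^ (h - 1 - s) - 1,
       i = 2 ^ s * i1 & j = i1 + 2 ^ (h - s)].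

Section OddLength.

Variable h : nat.
Local Notation m := h.*2.+1.

Lemma exp2_odd_length : 2 ^ m = 2 * 2 ^ h * 2 ^ h.
Proof. by rewrite expnS -mulnA -expnD addnn. Qed.

Lemma shift_mul_exp2_mod_ge i t : 0 < h -> i < 2 ^ h -> t <= h ->
  2 ^ h <= ((i + 2 ^ h) * 2 ^ t) %% (2 ^ m - 1).
Proof.
move=> h_gt0 i_lt le_th.
have H2 : 2 <= 2 ^ h by rewrite -{1}(expn1 2) leq_exp2l.
have T_le : (i + 2 ^ h) * 2 ^ t <= (i + 2 ^ h) * 2 ^ h.
  by rewrite leq_mul2l leq_exp2l // le_th orbT.
rewrite modn_small; last by rewrite exp2_odd_length; nia.
by rewrite -[X in X <= _]muln1 leq_mul ?leq_addl ?expn_gt0.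
Qed.

Lemma shift_mul_exp2_modE i r : 0 < r <= h -> i < 2 ^ h ->
  ((i + 2 ^ h) * 2 ^ (m - r)) %% (2 ^ m - 1)
  = i %/ 2 ^ r + 2 ^ (h - r) + i %% 2 ^ r * 2 ^ (m - r).
Proof.
case/andP=> r_gt0 le_rh i_lt.
have eH : 2 ^ h = 2 ^ (h - r) * 2 ^ r by rewrite -expnD subnK.
have eM : 2 ^ m = 2 ^ r * 2 ^ (m - r) by rewrite -expnD subnKC //; lia.
have E2_le : 2 ^ (h - r) * 2 <= 2 ^ h.
  by rewrite eH leq_mul2l (leq_trans _ (leq_pexp2l _ r_gt0)) ?orbT.
have HT_le : 2 ^ h * 2 <= 2 ^ (m - r) by rewrite -expnSr leq_exp2l //; lia.
have ei : i + 2 ^ h = (i %/ 2 ^ r + 2 ^ (h - r)) * 2 ^ r + i %% 2 ^ r.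
  by rewrite mulnDl -eH addnAC -divn_eq.
have q_lt : i %/ 2 ^ r < 2 ^ (h - r) by rewrite ltn_divLR ?expn_gt0 // -eH.
have b_lt : i %% 2 ^ r < 2 ^ r by rewrite ltn_mod expn_gt0.
rewrite ei exp2_rot_mod_Mersenne; last lia.
rewrite modn_small // eM; nia.
Qed.

Lemma cyc_coset_shift_pair i j : shift_pair h i j -> cyc_coset m (i + 2 ^ h) j.
Proof.
case=> s [i1 [/andP[s_ge2 le_s] _ /andP[_ i1_le] -> ->]].
have i1_lt : i1 < 2 ^ (h - s).
  by rewrite (leq_ltn_trans i1_le) // (leq_ltn_trans (leq_subr 1 _)) // ltn_exp2l //; lia.
exists (m - s); rewrite shift_mul_exp2_modE; last 2 first.
- lia.
- by rewrite -(subnKC (leq_trans le_s (leq_subr 2 h))) expnD ltn_pmul2l ?expn_gt0.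
by rewrite mulKn ?expn_gt0 // modnMr mul0n addn0.
Qed.

Lemma shift_pair_of_rotation i j r : 0 < r <= h -> 0 < i < 2 ^ (h - 1) ->
  j < 2 ^ (h - 1) -> odd j ->
  j = i %/ 2 ^ r + 2 ^ (h - r) + i %% 2 ^ r * 2 ^ (m - r) -> shift_pair h i j.
Proof.
move=> /andP[r_gt0 le_rh] /andP[i_gt0 i_lt] j_lt j_odd ej.
have b0 : i %% 2 ^ r = 0.
  apply/eqP; rewrite -leqn0 leqNgt; apply/negP=> b_gt0.
  have : 2 ^ (h - 1) <= 2 ^ (m - r) by rewrite leq_exp2l //; lia.
  have : 2 ^ (m - r) <= j by rewrite ej (leq_trans (leq_pmull _ b_gt0)) ?leq_addl.
  lia.
have ei : i = i %/ 2 ^ r * 2 ^ r by rewrite {1}(divn_eq i (2 ^ r)) b0 addn0.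
rewrite {}b0 mul0n addn0 in ej.
set q := i %/ 2 ^ r in ei ej.
have q_gt0 : 0 < q by move: i_gt0; rewrite ei muln_gt0 => /andP[].
have r_lt : r < h - 1.
  by rewrite -(ltn_exp2l _ _ (leqnn 2)) (leq_ltn_trans _ i_lt) // ei leq_pmull.
have r_ge2 : 2 <= r.
  rewrite ltnNge; apply/negP=> r_le1.
  have r1 : r = 1 by lia.
  by move: j_lt; rewrite ej r1 subn1 ltnNge leq_addl.
exists r, q; split.
- lia.
- by move: j_odd; rewrite ej oddD oddX subn_eq0 leqNgt (leq_trans r_lt) ?leq_subr //= addbF.
- rewrite q_gt0 /= -ltnS subn1 prednK ?expn_gt0 //.
  by rewrite -(ltn_pmul2r (expn_gt0 2 r)) -ei -expnD subnK; lia.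
- by rewrite ei mulnC.
- exact: ej.
Qed.

Lemma shift_pair_of_cyc_coset i j : 0 < h -> 0 < i < 2 ^ (h - 1) ->
  j < 2 ^ (h - 1) -> odd j -> cyc_coset m (i + 2 ^ h) j -> shift_pair h i j.
Proof.
move=> h_gt0 i_range j_lt j_odd /(cyc_coset_exp2_ltn (ltn0Sn _))[t t_lt ej].
have le_PH : 2 ^ (h - 1) <= 2 ^ h by rewrite leq_exp2l ?leq_subr.
have i_lt : i < 2 ^ h by case/andP: i_range => _ /leq_trans; apply.
case: (leqP t h) => [le_th | lt_ht].
  by have := shift_mul_exp2_mod_ge h_gt0 i_lt le_th; rewrite -ej; lia.
apply: (@shift_pair_of_rotation _ _ (m - t)) => //; first lia.
by rewrite ej -{1}(subKn (ltnW t_lt)) shift_mul_exp2_modE //; lia.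
Qed.

End OddLength.

Theorem lemma7 (m : nat) (hm5 : 5 <= m) (hmodd : odd m) :
  let h := (m - 1) %/ 2 in
  forall i j : nat,
    1 <= i <= 2 ^ (h - 1) - 1 ->
    1 <= j <= 2 ^ (h - 1) - 1 ->
    odd j ->
    let cond := exists s i1 : nat,
        [/\ 2 <= s <= h - 2, odd i1, 1 <= i1 <= 2 ^ (h - 1 - s) - 1,
            i = 2 ^ s * i1 & j = i1 + 2 ^ (h - s)] in
    (cond -> cyc_coset m (i + 2 ^ h) `&` cyc_coset m j = cyc_coset m j) /\
    (~ cond -> cyc_coset m (i + 2 ^ h) `&` cyc_coset m j = set0).
Proof.
move=> h i j i_range /andP[_ j_le] j_odd cond.
have em : m = h.*2.+1 by have := modn2 m; rewrite hmodd /h; lia.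
have h_gt0 : 0 < h by rewrite /h; lia.
have P_gt0 : 0 < 2 ^ (h - 1) := expn_gt0 2 _.
have j_lt : j < 2 ^ (h - 1) by lia.
split=> [pair_ij | not_pair_ij].
  by apply/cyc_coset_meet_id; rewrite em; apply: cyc_coset_shift_pair.
apply: cyc_coset_meet0; first by rewrite em.
  rewrite em (leq_trans j_lt) // leq_subRL ?expn_gt0 // add1n ltn_exp2l //; lia.
have i_lt : 0 < i < 2 ^ (h - 1) by lia.
by rewrite em => /(shift_pair_of_cyc_coset h_gt0 i_lt j_lt j_odd).
Qed.
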